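(* Let $d\ge1$ and let $\mathcal{G}=(G;T_1,\ldots,T_d)$ be a $d$-tree decomposition. Then there exists a sequence of $d$-tree decompositions $\mathcal{K}_1=\mathcal{G}^{(1)}\rightarrow\mathcal{G}^{(2)}\rightarrow\cdots\rightarrow\mathcal{G}^{(n)}=\mathcal{G}$ such that for all $2\le i\le n$, $\mathcal{G}^{(i)}$ is obtained from $\mathcal{G}^{(i-1)}$ by a $d$-tree $j$-extension for some $0\le j\le d-1$.
   Context: A multi-graph is finite and loop-free, possibly with parallel edges. A $d$-tree decomposition is a tuple $\mathcal{G}=(G;T_1,\ldots,T_d)$ where $G$ is a multi-graph and $T_1,\ldots,T_d$ are spanning trees of $G$ whose edge sets partition $E(G)$ (distinct parallel edges are distinct edges). By convention, $\mathcal{K}_1=(K_1;T_1,\ldots,T_d)$, where $K_1$ is the graph with one vertex and no edges and all $T_i$ are edgeless, is a $d$-tree decomposition. For a multi-graph $G$, a $d$-dimensional $j$-extension forms $G'$ by deleting a set $F$ of $j$ edges of $G$ and adding a new vertex $v$ together with $d+j$ new edges joining $v$ to vertices of $G$ (parallel new edges allowed), such that every endpoint of an edge of $F$ is a neighbour of $v$ in $G'$ (for $d=1$ any $j\ge0$ is allowed). A $d$-tree decomposition $\mathcal{G}'=(G';T_1',\ldots,T_d')$ is obtained from $\mathcal{G}=(G;T_1,\ldots,T_d)$ by a $d$-tree $j$-extension ($0\le j\le d-1$) if $G'$ is obtained from $G$ by a $d$-dimensional $j$-extension adding a new vertex $v$, and for each $i$, $T_i'$ is obtained from $T_i$ by a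 $1$-dimensional $k_i$-extension adding the same vertex $v$, for some $0\le k_i\le d-1$ (so $\sum_i k_i=j$). *)

From mathcomp Require Import all_boot.
Set Implicit Arguments. Unset Strict Implicit. Unset Printing Implicit Defensive.

(* A multigraph with a colouring of its edges (colour i = edges of T_(i+1)).
   Vertices are 0, ..., nv-1.  An edge is a triple ((u, v), c): endpoints u, v
   (unordered: ((u,v),c) and ((v,u),c) denote the same kind of edge) and
   colour c.  Parallel edges are repeated entries of the list; distinct
   positions are distinct edges. *)
Record tdec := TDec { nv : nat; edges : seq (nat * nat * nat) }.

Definition joins (e : nat * nat) (x y : nat) : bool :=
  ((e.1 == x) && (e.2 == y)) || ((e.1 == y) && (e.2 == x)).

Definition graph_adj (n : nat) (s : seq (nat * nat)) : rel 'I_n :=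
  fun x y => has (fun e => joins e x y) s.

Definition connected_on (n : nat) (s : seq (nat * nat)) : Prop :=
  forall x y : 'I_n, connect (graph_adj s) x y.

Definition has_cycle (s : seq (nat * nat)) : Prop :=
  exists (idx vs : seq nat),
    [/\ 2 <= size idx, size vs = size idx, uniq idx, uniq vs
      & all (fun k => k < size s) idx /\
        forall j, j < size idx ->
          joins (nth (0, 0) s (nth 0 idx j)) (nth 0 vs j)
                (nth 0 vs (j.+1 %% size idx))].

Definition is_spanning_tree (n : nat) (s : seq (nat * nat)) : Prop :=
  [/\ 0 < n,
      all (fun e => [&& e.1 < n, e.2 < n & e.1 != e.2]) s,
      connected_on n s
    & ~ has_cycle s].

Definition color_class (E : seq (nat * nat * nat)) (i : nat) : seq (nat * nat) :=
  [seq e.1 | e <- E & e.2 == i].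

Definition is_tdec (d : nat) (G : tdec) : Prop :=
  (forall e, e \in edges G -> e.1.1 != e.1.2 /\ e.2 < d) /\
  (forall i, i < d -> is_spanning_tree (nv G) (color_class (edges G) i)).

Definition K1 : tdec := TDec 1 [::].

(* G' is obtained from G by a d-tree j-extension.  The new vertex is
   v = nv G; m selects the kept edges, F = deleted edges, A = new edges. *)
Definition tree_ext (d : nat) (G G' : tdec) (j : nat) : Prop :=
  exists (m : bitseq) (A : seq (nat * nat * nat)),
    let v := nv G in
    let F := mask (map negb m) (edges G) in
    let R := mask m (edges G) in
    [/\ size m = size (edges G) /\ nv G' = v.+1,
        edges G' = R ++ A,
        size F = j /\ j <= d - 1,
        size A = d + j
      & [/\
            all (fun a => ((a.1.1 == v) && (a.1.2 < v)) ||
                          ((a.1.2 == v) && (a.1.1 < v))) A,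
            (* d-dimensional j-extension: endpoints of F are neighbours of v *)
            (forall f, f \in F -> forall x, x = f.1.1 \/ x = f.1.2 ->
               exists2 a, a \in A & joins a.1 v x),
            (* each T_i' is a 1-dimensional k_i-extension of T_i, k_i <= d-1 *)
            (forall i, i < d ->
               let k := count (fun f => f.2 == i) F in
               [/\ k <= d - 1,
                   count (fun a => a.2 == i) A = 1 + k
                 & forall f, f \in F -> f.2 = i ->
                     forall x, x = f.1.1 \/ x = f.1.2 ->
                       exists2 a, a \in A & (a.2 = i /\ joins a.1 v x)])
          & is_tdec d G']].

Definition tdec_iso (G H : tdec) : Prop :=
  nv G = nv H /\ size (edges G) = size (edges H) /\
  exists (sigma pi : nat -> nat),
    [/\ {in [pred x | x < nv G] &, injective sigma},
        (forall x, x < nv G -> sigma x < nv H),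
        {in [pred k | k < size (edges G)] &, injective pi},
        (forall k, k < size (edges G) -> pi k < size (edges H))
      & forall k, k < size (edges G) ->
          let e := nth (0, 0, 0) (edges G) k in
          let e' := nth (0, 0, 0) (edges H) (pi k) in
          e'.2 = e.2 /\ joins e'.1 (sigma e.1.1) (sigma e.1.2)].

From mathcomp Require Import all_boot zify.
Set Implicit Arguments. Unset Strict Implicit. Unset Printing Implicit Defensive.

(* A d-tree decomposition on n + 1 vertices has d n edges, since each of its trees has n,
   so some vertex v has degree less than 2 d.  Delete v and, in every tree T_i, reconnect
   the k_i + 1 neighbours of v in T_i by a star with k_i edges: every T_i stays a spanning
   tree, and sum_i (k_i + 1) < 2 d gives sum_i k_i <= d - 1.  The original decomposition is
   recovered from the smaller one by the d-tree (sum_i k_i)-extension that deletes the star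
   edges and re-attaches v, so induction on the number of vertices, up to relabelling,
   produces the sequence.  Spanning trees are handled through the characterisation
   "connected with n - 1 edges", obtained by counting connected components. *)

(** * Walks and cycles in edge lists *)

Definition edge_adj (s : seq (nat * nat)) : rel nat :=
  fun x y => has (fun e => joins e x y) s.

Definition linked (s : seq (nat * nat)) (x y : nat) : Prop :=
  exists2 p, path (edge_adj s) x p & last x p = y.

Lemma joins_sym e x y : joins e x y = joins e y x.
Proof. by rewrite /joins orbC. Qed.

Lemma joins_cases e x y : joins e x y -> (e.1 = x /\ e.2 = y) \/ (e.1 = y /\ e.2 = x).
Proof. by case/orP => /andP[/eqP-> /eqP->]; auto. Qed.

Lemma joins_inj e x y x' y' : joins e x y -> joins e x' y' ->
  (x = x' /\ y = y') \/ (x = y' /\ y = x').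
Proof. by move=> /joins_cases[[<- <-]|[<- <-]] /joins_cases[[<- <-]|[<- <-]]; auto. Qed.

Lemma edge_adj_sym s : symmetric (edge_adj s).
Proof. by move=> x y; apply: eq_has => e; rewrite joins_sym. Qed.

Lemma edge_adj_sub s t x y : {subset s <= t} -> edge_adj s x y -> edge_adj t x y.
Proof. by move=> st /hasP[e /st he hj]; apply/hasP; exists e. Qed.

Lemma linked_refl s x : linked s x x.
Proof. by exists [::]. Qed.

Lemma linked1 s x y : edge_adj s x y -> linked s x y.
Proof. by move=> h; exists [:: y]; rewrite /= ?h. Qed.

Lemma linked_trans s x y z : linked s x y -> linked s y z -> linked s x z.
Proof.
move=> [p hp <-] [q hq <-]; exists (p ++ q); first by rewrite cat_path hp.
by rewrite last_cat.
Qed.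

Lemma linked_ind s (P : nat -> Prop) y :
  P y -> (forall x z, edge_adj s x z -> linked s z y -> P z -> P x) ->
  forall x, linked s x y -> P x.
Proof.
move=> Py step x [p]; elim: p x => [|z p IH] x /=; first by move=> _ ->.
by move=> /andP[hxz hp] hl; apply: (step x z hxz); [exists p | apply: IH].
Qed.

Lemma linked_sym s x y : linked s x y -> linked s y x.
Proof.
elim/linked_ind; first exact: linked_refl.
by move=> a b hab _ hyb; apply: linked_trans hyb (linked1 _); rewrite edge_adj_sym.
Qed.

Lemma linked_sub s t x y : {subset s <= t} -> linked s x y -> linked t x y.
Proof.
move=> st; elim/linked_ind; first exact: linked_refl.
by move=> a b hab _ hb; apply: linked_trans hb; apply/linked1/(edge_adj_sub st).
Qed.

Lemma linked_bypass e t x y :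
  linked t e.1 e.2 -> linked (e :: t) x y -> linked t x y.
Proof.
move=> he; elim/linked_ind; first exact: linked_refl.
move=> a b /orP[/joins_cases[[<- <-]|[<- <-]]|/linked1 hab] _ hb.
- exact: linked_trans he hb.
- exact: linked_trans (linked_sym he) hb.
- exact: linked_trans hab hb.
Qed.

Lemma linked_cons e t x y : linked (e :: t) x y ->
  [\/ linked t x y, linked t x e.1 /\ linked t e.2 y | linked t x e.2 /\ linked t e.1 y].
Proof.
have r := linked_refl t.
elim/linked_ind; first exact/Or31/r.
move=> a b /orP[/joins_cases[[<- <-]|[<- <-]]|/linked1 hab] _.
- by case=> [h|[_ h]|[_ h]]; [apply: Or32 | apply: Or32 | apply: Or31].
- by case=> [h|[_ h]|[_ h]]; [apply: Or33 | apply: Or31 | apply: Or33].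
- case=> [h|[h1 h2]|[h1 h2]]; [apply: Or31 | apply: Or32 | apply: Or33].
  + exact: linked_trans hab h.
  + by split=> //; exact: linked_trans hab h1.
  + by split=> //; exact: linked_trans hab h1.
Qed.

Lemma has_cycle_cons e s : has_cycle s -> has_cycle (e :: s).
Proof.
move=> [idx [vs [h2 hs hu hv [ha hj]]]].
exists (map S idx), vs; rewrite size_map; split=> //.
- by rewrite map_inj_uniq // => x y [].
- split; first by rewrite all_map; apply: sub_all ha => k /=.
  by move=> j hj'; rewrite (nth_map 0) //=; exact: hj.
Qed.

Lemma mem_nth_drop_nth (T : eqType) x0 (s : seq T) p q :
  q < size s -> q != p -> nth x0 s q \in take p s ++ drop p.+1 s.
Proof.
move=> hq hne; rewrite mem_cat; case: (ltnP q p) => hqp.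
  by rewrite -(nth_take _ hqp) mem_nth // size_take; case: ifP => //; lia.
rewrite (_ : q = p.+1 + (q - p.+1)); last by move: hne; rewrite neq_ltn; lia.
by rewrite -nth_drop mem_nth ?orbT // size_drop; lia.
Qed.

Lemma has_cycle_redundant s : has_cycle s ->
  exists s1 e s2, s = s1 ++ e :: s2 /\ linked (s1 ++ s2) e.1 e.2.
Proof.
move=> [idx [vs [h2 _ hu _ [ha hj]]]].
set k := size idx in h2 hj.
have hk0 : 0 < k by lia.
set p := nth 0 idx 0.
have hp : p < size s by apply: (allP ha); apply: mem_nth hk0.
exists (take p s), (nth (0, 0) s p), (drop p.+1 s).
split; first by rewrite -(drop_nth _ hp) cat_take_drop.
set t := take p s ++ drop p.+1 s.
have step j : 0 < j < k -> edge_adj t (nth 0 vs j) (nth 0 vs (j.+1 %% k)).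
  move=> /andP[j0 jk]; apply/hasP; exists (nth (0, 0) s (nth 0 idx j)); last exact: hj.
  apply: mem_nth_drop_nth; first by apply: (allP ha); apply: mem_nth.
  by rewrite /p nth_uniq //; lia.
have to0 m j : j + m = k.-1 -> 0 < j -> linked t (nth 0 vs j) (nth 0 vs 0).
  elim: m j => [|m IH] j hjm hj0.
    by apply: linked1; have := step j; rewrite (_ : j.+1 = k) ?modnn; [apply; lia | lia].
  apply: linked_trans (IH j.+1 _ _); [apply: linked1 | lia | lia].
  by have := step j; rewrite modn_small; [apply; lia | lia].
have h10 : linked t (nth 0 vs 1) (nth 0 vs 0) by apply: (to0 k.-2); lia.
have := hj 0 hk0; rewrite modn_small /=; last by lia.
by move=> /joins_cases[[-> ->]|[-> ->]] //; exact: linked_sym.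
Qed.

(* The cycle is a duplicate-free walk from [a] to [b] closed up by the edge [(a, b)]. *)
Lemma linked_has_cycle a b t : a != b -> linked t a b -> has_cycle ((a, b) :: t).
Proof.
move=> hab [p0 hp0 hl0].
case: (shortenP hp0) hl0 => p hp hu _ hl.
set vs := a :: p; set m := size p.
have hm : 0 < m by move: hl hab; rewrite /m; case: (p) => //= ->; rewrite eqxx.
have hedge j : j < m -> edge_adj t (nth 0 vs j) (nth 0 vs j.+1).
  by move=> hj; move/(pathP 0): hp; apply.
set f := fun j => find (fun e => joins e (nth 0 vs j) (nth 0 vs j.+1)) t.
have hf j : j < m -> f j < size t by move=> hj; rewrite -has_find; exact: hedge.
have hfj j : j < m -> joins (nth (0, 0) t (f j)) (nth 0 vs j) (nth 0 vs j.+1).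
  by move=> hj; exact: (nth_find (0, 0) (hedge j hj)).
have nth_vs_inj i l : i <= m -> l <= m -> nth 0 vs i = nth 0 vs l -> i = l.
  by move=> hi hl' /eqP; rewrite nth_uniq //= ?ltnS // => /eqP.
exists ([seq (f j).+1 | j <- iota 0 m] ++ [:: 0]), vs.
rewrite size_cat size_map size_iota /= addn1; split=> //.
- rewrite cat_uniq /= andbT orbF; apply/andP; split; last by apply/mapP=> -[].
  rewrite map_inj_in_uniq ?iota_uniq // => j l; rewrite !mem_iota !add0n => hj hl' [] he.
  have := hfj j hj; rewrite he => h1.
  case: (joins_inj h1 (hfj l hl')) => [[/nth_vs_inj -> //]|[/nth_vs_inj e1 /nth_vs_inj e2]]; lia.
- split.
    rewrite all_cat /= andbT; apply/allP => x /mapP[j]; rewrite mem_iota add0n => hj ->.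
    by rewrite /= ltnS; exact: hf.
  move=> j hj; case: (ltnP j m) => hjm.
    rewrite nth_cat size_map size_iota hjm (nth_map 0) ?size_iota // nth_iota // add0n /=.
    by rewrite modn_small; [exact: hfj | lia].
  have -> : j = m by lia.
  rewrite nth_cat size_map size_iota ltnn subnn /= modnn.
  by rewrite /vs -/m -last_nth hl /joins !eqxx orbT.
Qed.

(** * Counting connected components *)

(* Components are counted through their least elements. *)
Section LeastRepresentatives.
Variable n : nat.

Definition least_reps (R : rel 'I_n) : {set 'I_n} :=
  [set x | [forall y, R x y ==> (x <= y)]].

Lemma least_repsP (R : rel 'I_n) x :
  reflect (forall y, R x y -> x <= y) (x \in least_reps R).
Proof.
rewrite inE; apply: (iffP forallP) => h y; first by move=> hy; have := h y; rewrite hy.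
exact/implyP/h.
Qed.

Lemma least_reps_sub (R R' : rel 'I_n) :
  subrel R R' -> least_reps R' \subset least_reps R.
Proof. by move=> hs; apply/subsetP => x /least_repsP h; apply/least_repsP => y /hs; exact: h. Qed.

Variables (R R' : rel 'I_n) (a b : 'I_n).
Hypothesis R_sym : forall x y, R x y -> R y x.
Hypothesis R_trans : forall x y z, R x y -> R y z -> R x z.
Hypothesis subRR' : subrel R R'.

Section AddEdge.
Hypothesis R'_split :
  forall x y, R' x y -> [\/ R x y, R x a /\ R b y | R x b /\ R a y].

Lemma least_reps_lost x : x \in least_reps R -> x \notin least_reps R' ->
  exists2 y : 'I_n, y < x & (R x a /\ R b y) \/ (R x b /\ R a y).
Proof.
move=> /least_repsP hx /least_repsP hx'.
have [y hy hyx] : exists2 y : 'I_n, R' x y & y < x.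
  apply/exists_inP; apply/negP => /exists_inP hn; apply: hx' => y hy.
  by rewrite leqNgt; apply/negP => hlt; apply: hn; exists y.
exists y => //; case: (R'_split hy) => [h|h|h]; [|by left|by right].
by have := hx _ h; rewrite leqNgt hyx.
Qed.

Lemma card_least_reps_add_edge : #|least_reps R| <= #|least_reps R'| + 1.
Proof.
suff : #|least_reps R :\: least_reps R'| <= 1.
  by rewrite cardsD (setIidPr (least_reps_sub subRR')); lia.
apply/card_le1_eqP => x1 x2; rewrite !in_setD => /andP[hx1' hx1] /andP[hx2' hx2].
have [y1 hy1 c1] := least_reps_lost hx1 hx1'.
have [y2 hy2 c2] := least_reps_lost hx2 hx2'.
move/least_repsP: hx1 => r1; move/least_repsP: hx2 => r2; apply: val_inj => /=.
case: c1 c2 => -[h1 h1'] [] [h2 h2'].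
- by have := r2 _ (R_trans h2 (R_sym h1)); have := r1 _ (R_trans h1 (R_sym h2)); lia.
- by have := r1 y2 (R_trans h1 h2'); have := r2 y1 (R_trans h2 h1'); lia.
- by have := r1 y2 (R_trans h1 h2'); have := r2 y1 (R_trans h2 h1'); lia.
- by have := r2 _ (R_trans h2 (R_sym h1)); have := r1 _ (R_trans h1 (R_sym h2)); lia.
Qed.
End AddEdge.

Hypothesis R_refl : reflexive R.
Hypothesis R'_sym : forall x y, R' x y -> R' y x.
Hypothesis R'_trans : forall x y z, R' x y -> R' y z -> R' x z.
Hypotheses (R'ab : R' a b) (nRab : ~~ R a b).

Lemma card_least_reps_bridge : #|least_reps R'| + 1 <= #|least_reps R|.
Proof.
have least c : exists2 m, R c m & m \in least_reps R.
  case: (arg_minnP (P := R c) val (R_refl c)) => m hm hmin.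
  by exists m => //; apply/least_repsP => y hy; apply: hmin; exact: R_trans hm _.
have [ma ha ra] := least a; have [mb hb rb] := least b.
have lost m m' : R' m m' -> m' < m -> m \in least_reps R -> m \notin least_reps R'.
  by move=> hmm' hlt _; apply/least_repsP => /(_ _ hmm'); lia.
have R'ab' : R' ma mb.
  apply: R'_trans (subRR' (R_sym ha)) (R'_trans R'ab (subRR' hb)).
have [m hm hm'] : exists2 m, m \in least_reps R & m \notin least_reps R'.
  case: (ltngtP ma mb) => [lt|lt|/val_inj eq].
  - by exists mb => //; apply: lost (R'_sym R'ab') lt rb.
  - by exists ma => //; apply: lost R'ab' lt ra.
  - by move: nRab; rewrite (R_trans ha (R_sym _)) // eq.
have : 0 < #|least_reps R :\: least_reps R'|.
  by apply/card_gt0P; exists m; rewrite in_setD hm hm'.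
by rewrite cardsD (setIidPr (least_reps_sub subRR')); lia.
Qed.
End LeastRepresentatives.

Definition in_range n (s : seq (nat * nat)) := all (fun e => (e.1 < n) && (e.2 < n)) s.

Lemma in_range_cons n e s : in_range n (e :: s) -> [/\ e.1 < n, e.2 < n & in_range n s].
Proof. by move=> /= /andP[/andP[-> ->] ->]. Qed.

Lemma edge_adj_in_range n s x y : in_range n s -> edge_adj s x y -> (x < n) && (y < n).
Proof.
by move=> /allP hr /hasP[e /hr /andP[h1 h2] /joins_cases[[<- <-]|[<- <-]]]; rewrite ?h1 ?h2.
Qed.

Lemma connect_linked n s (x y : 'I_n) : in_range n s ->
  connect (graph_adj s) x y <-> linked s x y.
Proof.
move=> hr; split.
  by move/connectP=> [p hp ->]; exists (map val p); rewrite ?path_map ?last_map.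
suff lift z : linked s z y -> forall x' : 'I_n, val x' = z -> connect (graph_adj s) x' y.
  by move=> h; exact: lift h x erefl.
elim/linked_ind => [x' /val_inj -> | a b hab _ IH x' hx']; first exact: connect0.
have /andP[_ hb] := edge_adj_in_range hr hab.
apply: (connect_trans (y := Ordinal hb)); last exact: IH.
by apply: connect1; rewrite /graph_adj /= hx'.
Qed.

Lemma connect_graph_adj_sym n s (x y : 'I_n) :
  connect (graph_adj s) x y -> connect (graph_adj s) y x.
Proof.
by rewrite (sym_connect_sym (_ : symmetric _)) // => u v; exact: edge_adj_sym.
Qed.

Definition ncomp n (s : seq (nat * nat)) := #|least_reps (connect (@graph_adj n s))|.

Lemma ncomp_nil n : ncomp n [::] = n.
Proof.
rewrite /ncomp (_ : least_reps _ = setT) ?cardsT ?card_ord //.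
by apply/setP => x; rewrite in_setT; apply/least_repsP => y /connectP[[|z p]] //= _ ->.
Qed.

Lemma ncomp_gt0 n s : 0 < n -> 0 < ncomp n s.
Proof. by move=> hn; apply/card_gt0P; exists (Ordinal hn); apply/least_repsP. Qed.

Lemma ncomp_connected n s :
  (forall x y : 'I_n, connect (graph_adj s) x y) -> ncomp n s <= 1.
Proof.
move=> hc; apply/card_le1_eqP => x y /least_repsP hx /least_repsP hy.
by apply: ord_inj; have := hx y (hc _ _); have := hy x (hc _ _); lia.
Qed.

Lemma connect_graph_adj_cons n e s (x y : 'I_n) :
  connect (graph_adj s) x y -> connect (graph_adj (e :: s)) x y.
Proof. by apply: connect_sub => u v h; apply/connect1/orP; right. Qed.

Lemma ncomp_cons n e s : in_range n (e :: s) -> ncomp n s <= ncomp n (e :: s) + 1.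
Proof.
move=> hr; have [h1 h2 hr'] := in_range_cons hr.
apply: (card_least_reps_add_edge (a := Ordinal h1) (b := Ordinal h2)).
- exact: connect_graph_adj_sym.
- by move=> x y z; apply: connect_trans.
- exact: connect_graph_adj_cons.
- have L (u v : 'I_n) : linked s u v -> connect (graph_adj s) u v.
    exact: (connect_linked _ _ hr').2.
  move=> x y /(connect_linked _ _ hr) /linked_cons.
  case=> [h|[h h']|[h h']]; [apply: Or31 | apply: Or32 | apply: Or33].
  + exact: L h.
  + by split; [exact: (L _ (Ordinal h1)) | exact: (L (Ordinal h2))].
  + by split; [exact: (L _ (Ordinal h2)) | exact: (L (Ordinal h1))].
Qed.

Lemma ncomp_cons_bridge n e s : in_range n (e :: s) -> ~ linked s e.1 e.2 ->
  ncomp n (e :: s) + 1 <= ncomp n s.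
Proof.
move=> hr hn; have [h1 h2 hr'] := in_range_cons hr.
apply: (card_least_reps_bridge (a := Ordinal h1) (b := Ordinal h2)).
- exact: connect_graph_adj_sym.
- by move=> x y z; apply: connect_trans.
- exact: connect_graph_adj_cons.
- exact: connect0.
- exact: connect_graph_adj_sym.
- by move=> x y z; apply: connect_trans.
- by apply: connect1; rewrite /graph_adj /= /joins !eqxx.
- by apply/negP => /(connect_linked _ _ hr').
Qed.

Lemma acyclic_ncomp n s : in_range n s -> all (fun e => e.1 != e.2) s -> ~ has_cycle s ->
  ncomp n s + size s = n.
Proof.
elim: s => [|e s IH] hr hl hc; first by rewrite ncomp_nil addn0.
have [_ _ hr'] := in_range_cons hr; move: hl => /= /andP[hne hl].
have := IH hr' hl (fun h => hc (has_cycle_cons e h)).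
have hbridge : ~ linked s e.1 e.2 by case: e hc hne {hr} => a b hc hne /(linked_has_cycle hne).
by have := ncomp_cons_bridge hr hbridge; have := ncomp_cons hr; lia.
Qed.

Lemma ncomp_size n s : in_range n s -> n <= ncomp n s + size s.
Proof.
elim: s => [|e s IH] hr; first by rewrite ncomp_nil addn0.
by have [_ _ /IH] := in_range_cons hr; have := ncomp_cons hr; rewrite /=; lia.
Qed.

Definition proper_edges n (s : seq (nat * nat)) :=
  all (fun e => [&& e.1 < n, e.2 < n & e.1 != e.2]) s.

Lemma proper_edgesP n s : proper_edges n s -> in_range n s /\ all (fun e => e.1 != e.2) s.
Proof. by move=> h; split; apply: sub_all h => e /and3P[h1 h2 h3]; rewrite ?h1 ?h2. Qed.

(* Spanning trees are recognised by counting edges instead of excluding cycles. *)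
Definition sized_tree n (s : seq (nat * nat)) :=
  [/\ 0 < n, proper_edges n s,
      forall x y, x < n -> y < n -> linked s x y & size s = n.-1].

Lemma spanning_tree_sized n s : is_spanning_tree n s -> sized_tree n s.
Proof.
move=> [hn ha hc hcy]; have [hr hl] := proper_edgesP ha.
have hc' x y : x < n -> y < n -> linked s x y.
  by move=> hx hy; apply: (connect_linked (Ordinal hx) (Ordinal hy) hr).1.
split=> //.
by have := acyclic_ncomp hr hl hcy; have := ncomp_gt0 s hn; have := ncomp_connected hc; lia.
Qed.

Lemma sized_spanning_tree n s : sized_tree n s -> is_spanning_tree n s.
Proof.
move=> [hn ha hc hsz]; have [hr _] := proper_edgesP ha.
split=> // [x y|/has_cycle_redundant [s1 [e [s2 [hs he]]]]].
  by apply/(connect_linked _ _ hr); exact: hc.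
set t := s1 ++ s2 in he.
have hp : perm_eq s (e :: t) by rewrite hs /t -cat1s perm_catCA.
have hrt : in_range n t.
  by apply/allP => z hz; apply: (allP hr); rewrite (perm_mem hp) inE hz orbT.
have hct (x y : 'I_n) : connect (graph_adj t) x y.
  apply/(connect_linked _ _ hrt); apply: linked_bypass he _.
  by apply: linked_sub (hc _ _ (ltn_ord x) (ltn_ord y)) => z; rewrite (perm_mem hp).
by have := ncomp_size hrt; have := ncomp_connected hct; have := perm_size hp; rewrite hsz /=; lia.
Qed.

(** * Relabelling decompositions *)

Definition bij_on N (f g : nat -> nat) :=
  forall x, x < N -> [/\ f x < N, g x < N, g (f x) = x & f (g x) = x].

Definition relabel_ends (f : nat -> nat) (e : nat * nat) := (f e.1, f e.2).

Definition relabel (f : nat -> nat) (e : nat * nat * nat) := (relabel_ends f e.1, e.2).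

(* A form of [tdec_iso] in which the edge bijection is a permutation of the edge list. *)
Definition tdec_perm_iso (G H : tdec) := nv G = nv H /\
  exists f g, bij_on (nv G) f g /\ perm_eq (edges H) (map (relabel f) (edges G)).

Lemma bij_on_inj N f g x y : bij_on N f g -> x < N -> y < N -> f x = f y -> x = y.
Proof.
by move=> hb /hb[_ _ gx _] /hb[_ _ gy _] e; rewrite -gx -gy e.
Qed.

Lemma bij_on_comp N f g f' g' : bij_on N f g -> bij_on N f' g' -> bij_on N (f' \o f) (g \o g').
Proof.
move=> h h' x hx; have [a b c dd] := h _ hx; have [a' b' c' d'] := h' _ hx.
have [a2 _ c2 _] := h' _ a; have [_ b2 _ d2] := h _ b'.
by split=> //=; rewrite ?c2 ?c ?d2 ?d'.
Qed.

Lemma joins_relabel f e x y : joins e x y -> joins (relabel_ends f e) (f x) (f y).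
Proof. by case/joins_cases=> -[<- <-]; rewrite /joins /= !eqxx ?orbT. Qed.

Lemma edge_adj_relabel f s x y :
  edge_adj s x y -> edge_adj (map (relabel_ends f) s) (f x) (f y).
Proof.
move=> /hasP[e he /(joins_relabel f) hj]; apply/hasP.
by exists (relabel_ends f e) => //; apply: map_f.
Qed.

Lemma sized_tree_relabel N f g s t : bij_on N f g -> sized_tree N s ->
  perm_eq t (map (relabel_ends f) s) -> sized_tree N t.
Proof.
move=> hb [hn ha hc hsz] hp; split=> //.
- apply/allP => z; rewrite (perm_mem hp) => /mapP[e he ->] /=.
  have /and3P[h1 h2 h3] := allP ha e he.
  have [f1 _ _ _] := hb _ h1; have [f2 _ _ _] := hb _ h2.
  by rewrite f1 f2; apply: contra h3 => /eqP /(bij_on_inj hb h1 h2) ->.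
- move=> x y /hb[_ gx _ fx] /hb[_ gy _ fy].
  have [p hpp hl] := hc _ _ gx gy.
  apply: (linked_sub (s := map (relabel_ends f) s)); first by move=> z; rewrite (perm_mem hp).
  exists (map f p); last by rewrite -fx last_map hl fy.
  by rewrite -{1}fx path_map; apply: sub_path hpp => a b; exact: edge_adj_relabel.
- by rewrite (perm_size hp) size_map.
Qed.

Lemma color_class_relabel f E i :
  color_class (map (relabel f) E) i = map (relabel_ends f) (color_class E i).
Proof. by rewrite /color_class filter_map -!map_comp. Qed.

Lemma perm_color_class E E' i : perm_eq E E' -> perm_eq (color_class E i) (color_class E' i).
Proof. by move=> h; apply/perm_map/perm_filter. Qed.

Lemma mem_color_class E e : e \in E -> e.1 \in color_class E e.2.
Proof. by move=> h; apply: map_f; rewrite mem_filter eqxx. Qed.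

Lemma tdec_edge d G e : is_tdec d G -> e \in edges G ->
  [/\ e.1.1 < nv G, e.1.2 < nv G, e.1.1 != e.1.2 & e.2 < d].
Proof.
move=> [h1 h2] he; have [_ hd] := h1 e he.
have [_ ha _ _] := h2 _ hd; have /and3P[a b c] := allP ha _ (mem_color_class he).
by split.
Qed.

Lemma is_tdec_perm_iso d G H : is_tdec d G -> tdec_perm_iso G H -> is_tdec d H.
Proof.
move=> hG [hn [f [g [hb hp]]]]; split.
  move=> e; rewrite (perm_mem hp) => /mapP[e0 he0 ->] /=.
  have [a b c dd] := tdec_edge hG he0; split=> //.
  by apply: contra c => /eqP /(bij_on_inj hb a b) ->.
move=> i hi; rewrite -hn; apply/sized_spanning_tree/(sized_tree_relabel hb).
  exact/spanning_tree_sized/(hG.2 i hi).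
by rewrite -color_class_relabel; exact: perm_color_class.
Qed.

Lemma tdec_perm_iso_perm G E : perm_eq E (edges G) -> tdec_perm_iso G (TDec (nv G) E).
Proof.
move=> hp; split=> //; exists id, id; split=> [x hx|] //=.
by rewrite (eq_map (g := id)) ?map_id // => -[[]].
Qed.

Lemma tdec_perm_iso_trans G H K : tdec_perm_iso G H -> tdec_perm_iso H K -> tdec_perm_iso G K.
Proof.
move=> [n1 [f [g [hb hp]]]] [n2 [f' [g' [hb' hp']]]]; split; first by rewrite n1.
exists (f' \o f), (g \o g'); split; first by apply: bij_on_comp => //; rewrite n1.
apply: (perm_trans hp'); rewrite -[map (relabel (f' \o f)) _]/(map (relabel f' \o relabel f) _).
by rewrite map_comp perm_map.
Qed.

Lemma tdec_perm_iso_tdec_iso d G H : is_tdec d G -> tdec_perm_iso G H -> tdec_iso H G.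
Proof.
move=> hG [hn [f [g [hb hp]]]].
have hs : size (edges H) = size (edges G) by rewrite (perm_size hp) size_map.
split=> //; split=> //.
have [Is hIs hE] := perm_iotaP (0, 0, 0) hp.
have hsI : size Is = size (edges H) by rewrite hE size_map.
have hI k : k < size (edges H) -> nth 0 Is k < size (edges G).
  move=> hk; have : nth 0 Is k \in iota 0 (size (map (relabel f) (edges G))).
    by rewrite -(perm_mem hIs) mem_nth // hsI.
  by rewrite mem_iota size_map.
exists g, (nth 0 Is); split.
- move=> x y; rewrite !inE -hn => /hb[_ _ _ fx] /hb[_ _ _ fy] e.
  by rewrite -fx e fy.
- by move=> x; rewrite -hn => /hb[].
- move=> x y; rewrite !inE => hx hy /eqP.
  by rewrite nth_uniq ?hsI ?(perm_uniq hIs) ?iota_uniq // => /eqP.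
- exact: hI.
- move=> k hk /=.
  have -> : nth (0, 0, 0) (edges H) k = relabel f (nth (0, 0, 0) (edges G) (nth 0 Is k)).
    by rewrite hE (nth_map 0) ?hsI // (nth_map (0, 0, 0)) ?hI.
  have [a b _ _] := tdec_edge hG (mem_nth (0, 0, 0) (hI _ hk)).
  have [_ _ ga _] := hb _ a; have [_ _ gb _] := hb _ b.
  by rewrite /= ga gb /joins !eqxx.
Qed.

(** * Deleting a vertex *)

Definition incident (v : nat) (e : nat * nat) := (e.1 == v) || (e.2 == v).

Definition other_end (v : nat) (e : nat * nat) := if e.1 == v then e.2 else e.1.

Definition nbrs v (s : seq (nat * nat)) := [seq other_end v e | e <- s & incident v e].

Definition star (U : seq nat) := [seq (head 0 U, u) | u <- behead U].

Lemma count_gt1_nth (T : Type) (x0 : T) (P : pred T) s : 1 < count P s ->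
  exists p q, [/\ p < q, q < size s, P (nth x0 s p) & P (nth x0 s q)].
Proof.
elim: s => [|x s IH] //=; case hx : (P x) => /=.
  rewrite add1n ltnS -has_count => hs.
  exists 0, (find P s).+1; split=> //=; first by rewrite ltnS -has_find.
  exact: nth_find.
by rewrite add0n => /IH [p [q [h1 h2 h3 h4]]]; exists p.+1, q.+1.
Qed.

Lemma parallel_has_cycle s v u : u != v -> 1 < count (fun e => joins e v u) s -> has_cycle s.
Proof.
move=> hu /(count_gt1_nth (0, 0)) [p [q [hpq hq h1 h2]]].
exists [:: p; q], [:: v; u]; split=> //=.
- by rewrite inE andbT neq_ltn hpq.
- by rewrite inE eq_sym hu.
- split; first by rewrite hq andbT (ltn_trans hpq hq).
  by case=> [|[|]] //= _; rewrite // joins_sym.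
Qed.

Lemma count_mem_nbrs s v u : u != v -> count_mem u (nbrs v s) = count (fun e => joins e v u) s.
Proof.
move=> hu; rewrite /nbrs count_map count_filter; apply: eq_count => -[a b].
rewrite /preim /predI /= /other_end /incident /joins /=.
case: (eqVneq a v) => [->|ha]; case: (eqVneq b v) => [->|hb] //=; rewrite ?eqxx /=.
- by rewrite !andbT orbb.
- by rewrite andbT andbF orbF.
Qed.

Lemma other_end_joins v e : incident v e -> e.1 < v.+1 -> e.2 < v.+1 -> e.1 != e.2 ->
  other_end v e < v /\ joins e v (other_end v e).
Proof.
case: e => a b; rewrite /incident /other_end /joins /=.
by case: (eqVneq a v) => [->|ha] /=; case: (eqVneq b v) => [->|hb] //=; rewrite ?eqxx ?orbT //; lia.
Qed.

Section DeleteVertex.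
Variables (n : nat) (s : seq (nat * nat)).
Hypotheses (n_gt0 : 0 < n) (s_tree : is_spanning_tree n.+1 s).

Let away := [seq e <- s | ~~ incident n e].

Lemma nbrs_lt u : u \in nbrs n s -> u < n.
Proof.
have [_ ha _ _] := s_tree.
move=> /mapP [e]; rewrite mem_filter => /andP[ht he] ->.
by have /and3P[h1 h2 h3] := allP ha e he; case: (other_end_joins ht h1 h2 h3).
Qed.

Lemma linked_nbrs x : x < n -> exists2 u, u \in nbrs n s & linked away x u.
Proof.
have [_ _ hc _] := spanning_tree_sized s_tree.
move=> hx; move: (hc x n (ltnW hx) (ltnSn n)) (ltn_eqF hx).
elim/linked_ind => [|a b hab _ IH]; first by rewrite eqxx.
move=> /negbT han; have /hasP[e he hj] := hab.
case: (eqVneq b n) => [hb|/negPf hbn].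
  subst b; exists a; last exact: linked_refl.
  apply/mapP; exists e; rewrite ?mem_filter ?he ?andbT /incident /other_end;
    by case/joins_cases: hj => -[-> ->]; rewrite ?eqxx ?orbT ?(negbTE han).
have [u hu hbu] := IH hbn; exists u => //; apply: linked_trans hbu; apply/linked1/hasP.
exists e => //; rewrite mem_filter he andbT /incident.
by case/joins_cases: hj => -[-> ->]; rewrite negb_or han hbn.
Qed.

Lemma nbrs_uniq : uniq (nbrs n s).
Proof.
have [_ _ _ hcy] := s_tree.
apply: count_mem_uniq => u; case hu: (u \in nbrs n s); last first.
  by apply/eqP; rewrite -leqn0 leqNgt -has_count has_pred1 hu.
have hun : u != n by rewrite neq_ltn nbrs_lt.
apply/eqP; rewrite eqn_leq -has_count has_pred1 hu andbT leqNgt count_mem_nbrs //.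
by apply/negP => /(parallel_has_cycle hun).
Qed.

Lemma nbrs_nonempty : 0 < size (nbrs n s).
Proof. by have [u hu _] := linked_nbrs n_gt0; case: (nbrs n s) hu. Qed.

Lemma delete_vertex_star : sized_tree n (away ++ star (nbrs n s)).
Proof.
have [_ ha _ hsz] := spanning_tree_sized s_tree.
have [h hh] : exists h, nbrs n s = h :: behead (nbrs n s).
  by move: nbrs_nonempty; case: (nbrs n s) => // h t _; exists h.
have hstar : star (nbrs n s) = [seq (h, u) | u <- behead (nbrs n s)] by rewrite hh.
have hhn : h \in nbrs n s by rewrite hh mem_head.
have hbeh u : u \in behead (nbrs n s) -> u \in nbrs n s.
  by rewrite [in X in _ -> X]hh inE orbC => ->.
split=> //.
- rewrite /proper_edges all_cat hstar; apply/andP; split.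
    apply/allP => e; rewrite mem_filter /incident negb_or => /andP[/andP[n1 n2] he].
    have /and3P[h1 h2 ->] := allP ha e he; rewrite andbT; apply/andP; split; lia.
  apply/allP => e /mapP[u hu ->] /=; rewrite (nbrs_lt hhn) (nbrs_lt (hbeh u hu)) /=.
  by have := nbrs_uniq; rewrite hh /= => /andP[+ _]; apply: contra => /eqP ->.
- have toh x : x < n -> linked (away ++ star (nbrs n s)) x h.
    move=> hx; have [u hu hxu] := linked_nbrs hx.
    apply: linked_trans (linked_sub _ hxu) _; first by move=> z hz; rewrite mem_cat hz.
    move: hu; rewrite {1}hh inE => /orP[/eqP ->|hu]; first exact: linked_refl.
    apply/linked_sym/linked1/hasP; exists (h, u); last by rewrite /joins /= !eqxx.
    by rewrite mem_cat hstar map_f ?orbT.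
  by move=> x y hx hy; apply: linked_trans (toh _ hx) (linked_sym (toh _ hy)).
- have e1 : size (nbrs n s) = count (incident n) s by rewrite size_map size_filter.
  have e2 : size away = count (predC (incident n)) s by rewrite size_filter.
  rewrite size_cat hstar size_map e2; move: e1 (count_predC (incident n) s).
  by rewrite {1}hh /= hsz /=; lia.
Qed.

End DeleteVertex.

Lemma sum_nat_eq_lt N x : \sum_(0 <= v < N) (x == v : nat) = (x < N).
Proof.
elim: N => [|N IH]; first by rewrite big_geq.
rewrite big_nat_recr //= IH ltnS (leq_eqVlt x N).
by case: (eqVneq x N) => [->|hne] /=; rewrite ?ltnn ?addn0.
Qed.

Lemma sum_count_exchange (T : eqType) (P : nat -> pred T) (w : T -> nat) N s :
  (forall e, e \in s -> \sum_(0 <= v < N) (P v e : nat) = w e) ->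
  \sum_(0 <= v < N) count (P v) s = \sum_(e <- s) w e.
Proof.
elim: s => [|e s IH] hw; first by rewrite big_nil big1.
rewrite big_cons -(hw e (mem_head _ _)) -IH => [|x hx]; first by rewrite -big_split.
by apply: hw; rewrite inE hx orbT.
Qed.

Lemma size_color_class E c : size (color_class E c) = count (fun e => e.2 == c) E.
Proof. by rewrite size_map size_filter. Qed.

Lemma tdec_size d G n : is_tdec d G -> nv G = n.+1 -> size (edges G) = d * n.
Proof.
move=> hG hn.
have h1 : \sum_(0 <= c < d) count (fun e => e.2 == c) (edges G) = \sum_(e <- edges G) 1.
  apply: (sum_count_exchange (P := fun c (e : nat * nat * nat) => e.2 == c)) => e he.
  by rewrite sum_nat_eq_lt; have [_ _ _ ->] := tdec_edge hG he.
have h2 : \sum_(0 <= c < d) count (fun e => e.2 == c) (edges G) = \sum_(0 <= c < d) n.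
  rewrite big_nat_cond [RHS]big_nat_cond; apply: eq_bigr => c /andP[/andP[_ hc] _].
  by have [_ _ _ hs] := spanning_tree_sized (hG.2 c hc); rewrite -size_color_class hs hn.
by rewrite -sum1_size -h1 h2 sum_nat_const_nat subn0.
Qed.

Definition degree (v : nat) (E : seq (nat * nat * nat)) := count (fun e => incident v e.1) E.

(* The degrees add up to [2 d n] over [n + 1] vertices. *)
Lemma tdec_low_degree d G n : 0 < d -> is_tdec d G -> nv G = n.+1 ->
  exists2 v, v < n.+1 & degree v (edges G) < 2 * d.
Proof.
move=> hd hG hn.
have hdeg : \sum_(0 <= v < n.+1) degree v (edges G) = \sum_(e <- edges G) 2.
  apply: (sum_count_exchange (P := fun v (e : nat * nat * nat) => incident v e.1)) => e he.
  have [a b c _] := tdec_edge hG he; rewrite hn in a b.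
  rewrite (eq_bigr (fun v => (e.1.1 == v : nat) + (e.1.2 == v))) => [|v _].
    by rewrite big_split /= !sum_nat_eq_lt a b.
  by rewrite /incident; case: (eqVneq e.1.1 v) => [hv|] //=; rewrite -hv eq_sym (negbTE c).
rewrite big_const_seq count_predT iter_addn_0 (tdec_size hG hn) in hdeg.
have [/hasP[v]|/hasPn hh] := boolP (has (fun v => degree v (edges G) < 2 * d) (iota 0 n.+1)).
  by rewrite mem_iota => /andP[_ hv] h; exists v.
suff : \sum_(0 <= v < n.+1) 2 * d <= \sum_(0 <= v < n.+1) degree v (edges G).
  by rewrite hdeg sum_nat_const_nat subn0; nia.
rewrite big_nat_cond [X in _ <= X]big_nat_cond; apply: leq_sum => v /andP[/andP[_ hv] _].
by rewrite leqNgt; apply: hh; rewrite mem_iota add0n hv.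
Qed.

Definition edges_at v (E : seq (nat * nat * nat)) := [seq e <- E | incident v e.1].

Definition edges_away v (E : seq (nat * nat * nat)) := [seq e <- E | ~~ incident v e.1].

Definition color_nbrs v E c := nbrs v (color_class E c).

Definition star_edges v E c : seq (nat * nat * nat) := [seq (x, c) | x <- star (color_nbrs v E c)].

Definition stars v d E := flatten [seq star_edges v E c | c <- iota 0 d].

(* Undoes the extension that added [N]: its neighbours in each tree are joined by a star. *)
Definition delete_vertex d N E := TDec N (edges_away N E ++ stars N d E).

Lemma color_class_cat E1 E2 c : color_class (E1 ++ E2) c = color_class E1 c ++ color_class E2 c.
Proof. by rewrite /color_class filter_cat map_cat. Qed.

Lemma color_class_edges_away v E c :
  color_class (edges_away v E) c = [seq e <- color_class E c | ~~ incident v e].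
Proof.
rewrite /color_class filter_map -!filter_predI; congr map.
by apply: eq_filter => e; rewrite /= andbC.
Qed.

Lemma color_class_star_edges v E c' c :
  color_class (star_edges v E c') c = if c' == c then star (color_nbrs v E c') else [::].
Proof.
rewrite /color_class /star_edges filter_map; case: (eqVneq c' c) => [->|hne].
  rewrite (eq_filter (a2 := predT)) ?filter_predT -?map_comp ?map_id // => x.
  by rewrite /preim /= eqxx.
by rewrite (eq_filter (a2 := pred0)) ?filter_pred0 // => x; rewrite /preim /= (negbTE hne).
Qed.

Lemma color_class_stars v d E c : c < d -> color_class (stars v d E) c = star (color_nbrs v E c).
Proof.
suff gen r : uniq r ->
    color_class (flatten [seq star_edges v E c' | c' <- r]) c =
    if c \in r then star (color_nbrs v E c) else [::].
  by move=> hc; rewrite gen ?iota_uniq // mem_iota hc.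
elim: r => [|c' r IH] //= /andP[hn hu]; rewrite color_class_cat IH // color_class_star_edges inE.
by case: (eqVneq c' c) => [<-|] //=; rewrite (negbTE hn) cats0.
Qed.

Lemma count_stars v d E c : c < d ->
  count (fun e => e.2 == c) (stars v d E) = (size (color_nbrs v E c)).-1.
Proof. by move=> hc; rewrite -size_color_class color_class_stars // size_map size_behead. Qed.

Lemma count_edges_at v E c : count (fun e => e.2 == c) (edges_at v E) = size (color_nbrs v E c).
Proof.
rewrite /edges_at /color_nbrs /nbrs size_map size_filter count_filter /color_class.
rewrite count_map count_filter.
by apply: eq_count => e; rewrite /predI /preim /= andbC.
Qed.

Lemma size_stars v d E : size (stars v d E) = \sum_(0 <= c < d) (size (color_nbrs v E c)).-1.
Proof.
rewrite size_flatten /shape -map_comp sumnE big_map /index_iota subn0.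
by apply: eq_bigr => c _; rewrite /= /star_edges size_map /star size_map size_behead.
Qed.

Lemma size_edges_at v d E : all (fun e => e.2 < d) E ->
  size (edges_at v E) = \sum_(0 <= c < d) size (color_nbrs v E c).
Proof.
move=> ha; rewrite -(eq_bigr _ (fun c _ => count_edges_at v E c)).
rewrite (sum_count_exchange (P := fun c (e : nat * nat * nat) => e.2 == c) (w := fun=> 1)).
  by rewrite sum1_size.
move=> e.
by rewrite mem_filter sum_nat_eq_lt => /andP[_ /(allP ha) ->].
Qed.

Lemma mem_stars v d E f : f \in stars v d E ->
  f.2 < d /\ exists2 u, u \in behead (color_nbrs v E f.2) & f.1 = (head 0 (color_nbrs v E f.2), u).
Proof.
move=> /flatten_mapP[c]; rewrite mem_iota add0n => /andP[_ hc] /mapP[x /mapP[u hu ->] ->] /=.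
by split=> //; exists u.
Qed.

Section DeleteLastVertex.
Variables (d N : nat) (G : tdec).
Hypotheses (N_gt0 : 0 < N) (G_tdec : is_tdec d G) (G_nv : nv G = N.+1).

Let E := edges G.

Lemma color_tree c : c < d -> is_spanning_tree N.+1 (color_class E c).
Proof. by rewrite -G_nv; exact: G_tdec.2. Qed.

Lemma delete_vertex_tdec : is_tdec d (delete_vertex d N E).
Proof.
have hc c : c < d -> sized_tree N (color_class (edges_away N E ++ stars N d E) c).
  move=> hcd; rewrite color_class_cat color_class_edges_away color_class_stars //.
  exact/delete_vertex_star/color_tree.
split=> [e he|i hi]; last exact/sized_spanning_tree/hc.
have hd : e.2 < d.
  move: he; rewrite mem_cat => /orP[|/mem_stars[] //].
  by rewrite mem_filter => /andP[_ /(tdec_edge G_tdec)[]].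
have [_ ha _ _] := hc _ hd.
by have /and3P[_ _ ->] := allP ha _ (mem_color_class he).
Qed.

Lemma color_nbrs_at c x : x \in color_nbrs N E c ->
  exists2 a, a \in edges_at N E & a.2 = c /\ joins a.1 N x.
Proof.
move=> /mapP[e']; rewrite mem_filter => /andP[ht /mapP[a]].
rewrite mem_filter => /andP[/eqP hac ha] he' ->; subst e'.
exists a; first by rewrite mem_filter ht ha.
have [h1 h2 h3 _] := tdec_edge G_tdec ha; rewrite G_nv in h1 h2.
by split=> //; case: (other_end_joins ht h1 h2 h3).
Qed.

Lemma stars_ends f x : f \in stars N d E -> x = f.1.1 \/ x = f.1.2 ->
  x < N /\ exists2 a, a \in edges_at N E & a.2 = f.2 /\ joins a.1 N x.
Proof.
move=> /mem_stars [hd [u hu hf]] hx.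
have hxU : x \in color_nbrs N E f.2.
  move: hx (nbrs_nonempty N_gt0 (color_tree hd)) hu; rewrite hf /color_nbrs.
  by case: (nbrs _ _) => [|h t] //= [->|->] _ hu; rewrite inE ?eqxx ?hu ?orbT.
split; first by apply: (nbrs_lt (color_tree hd)).
exact: color_nbrs_at hxU.
Qed.

Lemma edges_at_ends a : a \in edges_at N E ->
  ((a.1.1 == N) && (a.1.2 < N)) || ((a.1.2 == N) && (a.1.1 < N)).
Proof.
rewrite mem_filter => /andP[ht ha].
have [h1 h2 h3 _] := tdec_edge G_tdec ha; rewrite G_nv in h1 h2.
move: ht h3; rewrite /incident; case: (eqVneq a.1.1 N) => [-> _|ne /= /eqP ->] /=.
  by rewrite eq_sym ltn_neqAle -ltnS h2 => ->.
by rewrite eqxx ltn_neqAle ne -ltnS h1.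
Qed.

Lemma split_edges_iso : tdec_perm_iso G (TDec N.+1 (edges_away N E ++ edges_at N E)).
Proof. by rewrite -G_nv; apply: tdec_perm_iso_perm; rewrite perm_catC perm_filterC. Qed.

Hypothesis low_degree : degree N E < 2 * d.

Lemma size_stars_edges_at : size (edges_at N E) = d + size (stars N d E).
Proof.
have hall : all (fun e => e.2 < d) E by apply/allP => e /(tdec_edge G_tdec)[].
rewrite (size_edges_at _ hall) size_stars.
transitivity (\sum_(0 <= c < d) ((size (color_nbrs N E c)).-1 + 1)).
  rewrite big_nat_cond [RHS]big_nat_cond; apply: eq_bigr => c /andP[/andP[_ hc] _].
  by rewrite addn1 prednK // (nbrs_nonempty N_gt0 (color_tree hc)).
by rewrite big_split sum_nat_const_nat subn0 muln1 addnC.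
Qed.

Lemma size_stars_lt : size (stars N d E) <= d - 1.
Proof.
by move: low_degree; rewrite /degree -size_filter -/(edges_at N E) size_stars_edges_at; lia.
Qed.

Lemma delete_vertex_ext :
  tree_ext d (delete_vertex d N E) (TDec N.+1 (edges_away N E ++ edges_at N E))
    (size (stars N d E)).
Proof.
set R := edges_away N E; set F := stars N d E; set A := edges_at N E.
exists (nseq (size R) true ++ nseq (size F) false), A => /=.
rewrite map_cat !map_nseq /= !mask_cat ?size_nseq // mask_true // mask_false.
rewrite mask_false mask_true // cats0 /=.
have ends f x : f \in F -> x = f.1.1 \/ x = f.1.2 ->
    exists2 a, a \in A & a.2 = f.2 /\ joins a.1 N x.
  by move=> hf /(stars_ends hf)[].
split=> //.
- by rewrite !size_cat !size_nseq.
- by split=> //; exact: size_stars_lt.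
- exact: size_stars_edges_at.
split.
- exact/allP/edges_at_ends.
- by move=> f hf x /(ends _ _ hf)[a ? []]; exists a.
- move=> i hi; split; last by move=> f hf <- x /(ends _ _ hf).
    exact: leq_trans (count_size _ _) size_stars_lt.
  rewrite count_stars // count_edges_at add1n prednK //.
  exact: nbrs_nonempty N_gt0 (color_tree hi).
- exact: is_tdec_perm_iso G_tdec split_edges_iso.
Qed.
End DeleteLastVertex.

(** * Transporting extensions along relabellings *)

Lemma perm_mask_split (T : eqType) m (s : seq T) :
  size m = size s -> perm_eq s (mask m s ++ mask (map negb m) s).
Proof.
elim: s m => [|x s IH] [|b m] //= [/IH hp]; case: b => /=; first by rewrite perm_cons.
by rewrite perm_sym (perm_catCA _ [:: x]) /= perm_cons perm_sym.
Qed.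

Lemma perm_cat_mask (T : eqType) (t a b : seq T) : perm_eq t (a ++ b) ->
  exists m, [/\ size m = size t, perm_eq (mask m t) a & perm_eq (mask (map negb m) t) b].
Proof.
elim: t a b => [|x t IH] a b hp.
  by exists [::]; move: (perm_size hp); rewrite size_cat; case: a b {hp} => [|? ?] [|? ?].
have : x \in a ++ b by rewrite -(perm_mem hp) mem_head.
rewrite mem_cat; case hxa : (x \in a) => /= hx.
  have /IH[m [hm1 hm2 hm3]] : perm_eq t (rem x a ++ b).
    by rewrite -(perm_cons x); apply: perm_trans hp _; rewrite -cat_cons perm_cat2r perm_to_rem.
  exists (true :: m); split=> //=; first by rewrite hm1.
  apply: (@perm_trans _ (x :: rem x a)); first by rewrite perm_cons.
  by rewrite perm_sym perm_to_rem.
have /IH[m [hm1 hm2 hm3]] : perm_eq t (a ++ rem x b).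
  rewrite -(perm_cons x); apply: perm_trans hp _.
  by rewrite perm_sym (perm_catCA [:: x]) perm_cat2l perm_sym perm_to_rem.
exists (false :: m); split=> //=; first by rewrite hm1.
apply: (@perm_trans _ (x :: rem x b)); first by rewrite perm_cons.
by rewrite perm_sym perm_to_rem.
Qed.

Definition fix_at v (f : nat -> nat) x := if x == v then v else f x.

Lemma bij_on_fix_at v f g : bij_on v f g -> bij_on v.+1 (fix_at v f) (fix_at v g).
Proof.
move=> hb x; rewrite ltnS leq_eqVlt /fix_at => /predU1P[->|hx]; first by rewrite !eqxx.
have [fx gx gfx fgx] := hb _ hx.
by rewrite !ltn_eqF // gfx fgx; split=> //; exact: ltnW.
Qed.

Lemma relabel_fix_at v f e : e.1.1 < v -> e.1.2 < v -> relabel (fix_at v f) e = relabel f e.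
Proof. by move=> h1 h2; rewrite /relabel /relabel_ends /fix_at !ltn_eqF. Qed.

Lemma tree_ext_perm_iso d G G' H j : is_tdec d G -> tdec_perm_iso G H -> tree_ext d G G' j ->
  exists2 H', tree_ext d H H' j & tdec_perm_iso G' H'.
Proof.
move=> hG [hn [f [g [hb hp]]]] [m [A [[hm hv'] hE [hF hj] hA [hor _ hcol hG']]]].
set v := nv G in hb hv' hor hcol; set R := mask m (edges G) in hE.
set F := mask (map negb m) (edges G) in hF hcol.
set f1 := fix_at v f; set A' := map (relabel f1) A.
have hRF : perm_eq (edges H) (map (relabel f) R ++ map (relabel f) F).
  by apply: perm_trans hp _; rewrite -map_cat perm_map // perm_mask_split.
have [m' [hm' hRm' hFm']] := perm_cat_mask hRF.
have hf1 e : e \in edges G -> relabel f1 e = relabel f e.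
  by case/(tdec_edge hG) => h1 h2 _ _; exact: relabel_fix_at.
have hiso : tdec_perm_iso G' (TDec v.+1 (mask m' (edges H) ++ A')).
  split=> //; exists f1, (fix_at v g); rewrite hv'; split; first exact: bij_on_fix_at.
  rewrite /= hE map_cat perm_cat2r.
  have -> : map (relabel f1) R = map (relabel f) R by apply/eq_in_map => e /mem_mask/hf1.
  exact: hRm'.
exists (TDec v.+1 (mask m' (edges H) ++ A')) => //.
have hFH f' : f' \in mask (map negb m') (edges H) ->
    exists2 f0, f0 \in F & f' = relabel f f0 by rewrite (perm_mem hFm') => /mapP.
have hnbF f' x : f' \in mask (map negb m') (edges H) -> x = f'.1.1 \/ x = f'.1.2 ->
    exists2 a', a' \in A' & a'.2 = f'.2 /\ joins a'.1 v x.
  case/hFH=> f0 hf0 -> {f'} hx.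
  have [h1 h2 _ hc] := tdec_edge hG (mem_mask hf0).
  have [y hy [-> hyv]] : exists2 y, y = f0.1.1 \/ y = f0.1.2 & x = f y /\ y < v.
    by case: hx => ->; [exists f0.1.1; [left|] | exists f0.1.2; [right|]].
  have [_ _ /(_ f0 hf0 erefl y hy) [a ha [hac hj']]] := hcol _ hc.
  exists (relabel f1 a); first exact: map_f.
  by split=> //; have := joins_relabel f1 hj'; rewrite /f1 /fix_at eqxx ltn_eqF.
have hcount i s : count (fun e => e.2 == i) (map (relabel f1) s) = count (fun e => e.2 == i) s.
  by rewrite count_map.
have hcountF i : count (fun e => e.2 == i) (mask (map negb m') (edges H)) =
                 count (fun e => e.2 == i) F.
  by rewrite (permP hFm') count_map.
exists m', A'; rewrite /= -hn -/v; split=> //.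
- by rewrite (perm_size hFm') size_map.
- by rewrite size_map.
split.
- apply/allP => _ /mapP[a /(allP hor) ha ->] /=; rewrite /f1 /fix_at.
  case/orP: ha => /andP[/eqP e hlt]; have [fv _ _ _] := hb _ hlt;
    by rewrite /= e !eqxx (ltn_eqF hlt) fv ?orbT.
- by move=> f' hf' x /(hnbF _ _ hf')[a' ? []]; exists a'.
- move=> i hi; have [hk hcA _] := hcol i hi; rewrite hcountF hcount; split=> //.
  by move=> f' hf' <- x /(hnbF _ _ hf').
- exact: is_tdec_perm_iso hG' hiso.
Qed.

(** * The induction *)

Definition transp (v w x : nat) := if x == v then w else if x == w then v else x.

Lemma transpK v w : involutive (transp v w).
Proof.
rewrite /transp => x; case: (eqVneq x v) => [->|xv]; first by rewrite eqxx; case: eqVneq.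
case: (eqVneq x w) => [->|xw]; first by rewrite eqxx.
by rewrite (negbTE xv) (negbTE xw).
Qed.

Lemma bij_on_transp n v w : v < n -> w < n -> bij_on n (transp v w) (transp v w).
Proof.
move=> hv hw x hx; rewrite transpK.
have hlt : transp v w x < n by rewrite /transp; case: ifP => // _; case: ifP.
by split.
Qed.

Lemma transp_eqr v w x : (transp v w x == w) = (x == v).
Proof.
rewrite /transp; case: (eqVneq x v) => [_|xv]; first by rewrite eqxx.
by case: (eqVneq x w) => [xw|/negbTE //]; rewrite -xw eq_sym (negbTE xv).
Qed.

Lemma degree_transp v w E : degree w (map (relabel (transp v w)) E) = degree v E.
Proof.
by rewrite /degree count_map; apply: eq_count => e; rewrite /preim /incident /= !transp_eqr.
Qed.

Lemma tdec_low_degree_last d G N : 0 < d -> is_tdec d G -> nv G = N.+1 ->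
  exists2 G1, tdec_perm_iso G G1 & [/\ is_tdec d G1, nv G1 = N.+1 & degree N (edges G1) < 2 * d].
Proof.
move=> hd hG hn; have [v hv hdeg] := tdec_low_degree hd hG hn.
have hiso : tdec_perm_iso G (TDec N.+1 (map (relabel (transp v N)) (edges G))).
  by split=> //; exists (transp v N), (transp v N); rewrite hn; split=> //; exact: bij_on_transp.
exists (TDec N.+1 (map (relabel (transp v N)) (edges G))) => //.
by split=> //; [exact: is_tdec_perm_iso hG hiso | rewrite /= degree_transp].
Qed.

Lemma tdec_reduce d G N : 0 < d -> 0 < N -> is_tdec d G -> nv G = N.+1 ->
  exists G0 G1 j, [/\ is_tdec d G0, nv G0 = N, tree_ext d G0 G1 j & tdec_perm_iso G G1].
Proof.
move=> hd hN hG hn; have [G1 hiso [hG1 hn1 hdeg]] := tdec_low_degree_last hd hG hn.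
exists (delete_vertex d N (edges G1)).
exists (TDec N.+1 (edges_away N (edges G1) ++ edges_at N (edges G1))).
exists (size (stars N d (edges G1))); split=> //.
- exact: delete_vertex_tdec.
- exact: delete_vertex_ext.
- exact: tdec_perm_iso_trans hiso (split_edges_iso hn1).
Qed.

Definition extension_seq d (s : seq tdec) :=
  (forall i, i < size s -> is_tdec d (nth K1 s i)) /\
  (forall i, i < size s ->
     exists2 j, j <= d - 1 & tree_ext d (nth K1 (K1 :: s) i) (nth K1 s i) j).

Lemma extension_seq_rcons d s H j :
  extension_seq d s -> tree_ext d (last K1 s) H j -> extension_seq d (rcons s H).
Proof.
move=> [hs hx] hH; have [_ [_ [_ _ [_ hj] _ [_ _ _ hHd]]]] := hH.
split=> i; rewrite size_rcons ltnS leq_eqVlt => /predU1P[->|hi].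
- by rewrite nth_rcons ltnn eqxx.
- by rewrite nth_rcons hi; exact: hs.
- by rewrite -rcons_cons !nth_rcons ltnn eqxx /= ltnSn -last_nth; exists j.
- by rewrite -rcons_cons !nth_rcons /= hi ltnS ltnW //; exact: hx.
Qed.

Lemma tdec_K1 d G : is_tdec d G -> nv G = 1 -> tdec_perm_iso G K1.
Proof.
move=> hG hn; split=> //; exists id, id; rewrite hn; split=> [x hx|]; first by split.
case hE: (edges G) => [|e E] //.
have [] := tdec_edge hG (e := e); first by rewrite hE mem_head.
by rewrite hn !ltnS !leqn0 => /eqP -> /eqP ->; rewrite eqxx.
Qed.

Lemma tdec_extension_seq d N G : 0 < d -> is_tdec d G -> nv G = N.+1 ->
  exists2 s, extension_seq d s & tdec_perm_iso G (last K1 s).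
Proof.
move=> hd; elim: N G => [|N IH] G hG hn; first by exists [::]; [by split | exact: tdec_K1 hG hn].
have [G0 [G1 [j [hG0 hn0 hext hiso]]]] := tdec_reduce hd (ltn0Sn N) hG hn.
have [s hs hiso0] := IH G0 hG0 hn0.
have [H hH hiso1] := tree_ext_perm_iso hG0 hiso0 hext.
exists (rcons s H); first exact: extension_seq_rcons hH.
by rewrite last_rcons; exact: tdec_perm_iso_trans hiso hiso1.
Qed.

Theorem corollary3p5 (d : nat) (G : tdec) :
  1 <= d -> is_tdec d G ->
  exists s : seq tdec,
    (forall i, i < size s -> is_tdec d (nth K1 s i)) /\
    (forall i, i < size s ->
       exists2 j, j <= d - 1 & tree_ext d (nth K1 (K1 :: s) i) (nth K1 s i) j) /\
    tdec_iso (last K1 s) G.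
Proof.
move=> hd hG; have [hn _ _ _] := hG.2 0 hd.
have [s [hs hx] hiso] := tdec_extension_seq hd hG (esym (ltn_predK hn)).
by exists s; split=> //; split=> //; exact: tdec_perm_iso_tdec_iso hG hiso.
Qed.
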